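(* Let $\boldsymbol x^*$ be a pure Nash equilibrium of $\mathcal L(n,S)$ that satisfies the vertex property. Then for every point $w\in S$, \[ \operatorname{card}\{i\in N: x_i^*=w\}\le \operatorname{degree}(w). \]
   Context: Network: $(V,E)$ is a finite connected graph with no vertex of degree $2$; each edge $e$ has a length $\lambda(e)>0$. $S$ is the metric measure space obtained by identifying each edge with a segment of length $\lambda(e)$, with length measure $\lambda$ and shortest-path distance $d$. For $v\in V$, $\operatorname{degree}(v)$ is its graph degree. For a point $x\in S\setminus V$ (interior of an edge), $\operatorname{degree}(x)=2$. Location game $\mathcal L(n,S)$ with player set $N=\{1,\dots,n\}$: each player chooses a point of $S$. Consumers are distributed according to $\lambda$, and each shops at a closest occupied location. Consumers equidistant from several closest occupied locations are split equally among those locations, and the share of a location is split equally among the players located there. A player's payoff is the mass of consumers she attracts. Nash equilibria are pure. A profile satisfies the vertex property if every vertex of degree $\ge3$ is occupied by at least one player. *)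

From Stdlib Require Import Reals Lra Lia List Classical ClassicalEpsilon.
Import ListNotations.
Open Scope R_scope.

(* The segment of edge e is parametrised by t in [0, lam e],
   t = 0 being the endpoint [esrc E e], t = lam e the endpoint [edst E e]. *)

Definition esrc (E : list (nat * nat)) (e : nat) : nat := fst (nth e E (0%nat, 0%nat)).
Definition edst (E : list (nat * nat)) (e : nat) : nat := snd (nth e E (0%nat, 0%nat)).

Fixpoint countP (P : nat -> Prop) (m : nat) : nat :=
  match m with
  | O => O
  | S k => (countP P k + (if excluded_middle_informative (P k) then 1 else 0))%nat
  end.

Fixpoint sumR (f : nat -> R) (m : nat) : R :=
  match m with
  | O => 0
  | S k => sumR f k + f k
  end.

Definition vdegree (E : list (nat * nat)) (v : nat) : nat :=
  countP (fun e => esrc E e = v \/ edst E e = v) (length E).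

Inductive WalkLen (E : list (nat * nat)) (lam : nat -> R) : nat -> nat -> R -> Prop :=
  | walk_nil : forall u, WalkLen E lam u u 0
  | walk_fwd : forall e w L, (e < length E)%nat ->
      WalkLen E lam (edst E e) w L -> WalkLen E lam (esrc E e) w (lam e + L)
  | walk_bwd : forall e w L, (e < length E)%nat ->
      WalkLen E lam (esrc E e) w L -> WalkLen E lam (edst E e) w (lam e + L).

Definition network (nV : nat) (E : list (nat * nat)) (lam : nat -> R) : Prop :=
  (1 <= length E)%nat /\
  (forall e, (e < length E)%nat ->
     (esrc E e < nV)%nat /\ (edst E e < nV)%nat /\ esrc E e <> edst E e /\ 0 < lam e) /\
  (forall e f, (e < f)%nat -> (f < length E)%nat ->
     ~ ((esrc E e = esrc E f /\ edst E e = edst E f) \/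
        (esrc E e = edst E f /\ edst E e = esrc E f))) /\
  (forall u v, (u < nV)%nat -> (v < nV)%nat -> exists L, WalkLen E lam u v L) /\
  (forall v, (v < nV)%nat -> vdegree E v <> 2%nat).

Inductive Pt : Type :=
  | PV : nat -> Pt
  | PE : nat -> R -> Pt.    (* interior point of edge e at position t, 0 < t < lam e *)

Definition valid_pt (nV : nat) (E : list (nat * nat)) (lam : nat -> R) (x : Pt) : Prop :=
  match x with
  | PV v => (v < nV)%nat
  | PE e t => (e < length E)%nat /\ 0 < t < lam e
  end.

Definition pt_of (E : list (nat * nat)) (lam : nat -> R) (e : nat) (t : R) : Pt :=
  if Rle_dec t 0 then PV (esrc E e)
  else if Rle_dec (lam e) t then PV (edst E e)
  else PE e t.

Definition degree (E : list (nat * nat)) (x : Pt) : nat :=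
  match x with
  | PV v => vdegree E v
  | PE _ _ => 2%nat
  end.

Definition is_glb (A : R -> Prop) (m : R) : Prop :=
  (forall a, A a -> m <= a) /\ (forall m', (forall a, A a -> m' <= a) -> m' <= m).

Definition dV (E : list (nat * nat)) (lam : nat -> R) (u v : nat) : R :=
  epsilon (inhabits 0) (fun m => is_glb (WalkLen E lam u v) m).

(* shortest-path distance on S: a path between two points leaves an edge
   interior only through its endpoints *)
Definition dist (E : list (nat * nat)) (lam : nat -> R) (x y : Pt) : R :=
  let d := dV E lam in
  match x, y with
  | PV u, PV v => d u v
  | PV u, PE f t => Rmin (t + d u (esrc E f)) (lam f - t + d u (edst E f))
  | PE e s, PV v => Rmin (s + d (esrc E e) v) (lam e - s + d (edst E e) v)
  | PE e s, PE f t =>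
      let via := Rmin (Rmin (s + d (esrc E e) (esrc E f) + t)
                            (s + d (esrc E e) (edst E f) + (lam f - t)))
                      (Rmin ((lam e - s) + d (edst E e) (esrc E f) + t)
                            ((lam e - s) + d (edst E e) (edst E f) + (lam f - t))) in
      if Nat.eq_dec e f then Rmin (Rabs (s - t)) via else via
  end.

(* players are 0 .. n-1; a profile is x : nat -> Pt (values at i >= n irrelevant) *)

Definition share (E : list (nat * nat)) (lam : nat -> R) (n : nat) (x : nat -> Pt)
    (i : nat) (y : Pt) : R :=
  let closest (z : Pt) := forall j, (j < n)%nat -> dist E lam y z <= dist E lam y (x j) in
  (* number of distinct closest occupied locations (first occurrences) *)
  let ncl := countP (fun j => closest (x j) /\ forall k, (k < j)%nat -> x k <> x j) n in
  let nat_i := countP (fun j => x j = x i) n in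
  if excluded_middle_informative (closest (x i))
  then / (INR ncl * INR nat_i) else 0.

(* Riemann integral (the integrands here are piecewise constant) *)
Definition integ (f : R -> R) (a b : R) : R :=
  match excluded_middle_informative (inhabited (Riemann_integrable f a b)) with
  | left H => RiemannInt (epsilon H (fun _ => True))
  | right _ => 0
  end.

Definition payoff (E : list (nat * nat)) (lam : nat -> R) (n : nat) (x : nat -> Pt)
    (i : nat) : R :=
  sumR (fun e => integ (fun t => share E lam n x i (pt_of E lam e t)) 0 (lam e)) (length E).

Definition upd (x : nat -> Pt) (i : nat) (y : Pt) : nat -> Pt :=
  fun j => if Nat.eq_dec j i then y else x j.

Definition nash (nV : nat) (E : list (nat * nat)) (lam : nat -> R) (n : nat)
    (x : nat -> Pt) : Prop :=
  (forall i, (i < n)%nat -> valid_pt nV E lam (x i)) /\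
  forall i y, (i < n)%nat -> valid_pt nV E lam y ->
    payoff E lam n (upd x i y) i <= payoff E lam n x i.

Definition vertex_property (nV : nat) (E : list (nat * nat)) (n : nat) (x : nat -> Pt) : Prop :=
  forall v, (v < nV)%nat -> (3 <= vdegree E v)%nat -> exists i, (i < n)%nat /\ x i = PV v.

(* Let [K] players sit at [w], among them [i0], and suppose [K > degree w].
   Player [i0] earns a positive payoff, since [w] is a nearest location for all
   consumers of a short interval next to [w]; at each consumer it gets at most
   [1/K] of the mass.  For small [eps], let [i0] deviate to one of the
   [degree w] unoccupied points at distance [eps] from [w] along the edges at
   [w].  Every consumer outside the [eps]-neighbourhood of [w] that patronises
   [w] strictly prefers one of these points and is then served by [i0] alone.
   Integrating, [K * payoff <= degree w * payoff + O(eps)], while each deviation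
   earns at most [payoff] by the Nash property; hence [K <= degree w]. *)

From Stdlib Require Import Reals Lra Lia List Classical ClassicalEpsilon.
From Coquelicot Require Import Coquelicot.
Open Scope R_scope.

Lemma countP_ext (P Q : nat -> Prop) m :
  (forall k, (k < m)%nat -> (P k <-> Q k)) -> countP P m = countP Q m.
Proof.
  induction m as [|m IH]; simpl; intros H; auto.
  rewrite IH by (intros; apply H; lia).
  destruct (excluded_middle_informative (P m)) as [Pm|Pm],
           (excluded_middle_informative (Q m)) as [Qm|Qm]; auto;
    exfalso; [apply Qm | apply Pm]; apply H; auto.
Qed.

Lemma countP_le P m : (countP P m <= m)%nat.
Proof.
  induction m; simpl; auto. destruct (excluded_middle_informative (P m)); lia.
Qed.

Lemma countP_pos_iff (P : nat -> Prop) m :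
  (1 <= countP P m)%nat <-> exists k, (k < m)%nat /\ P k.
Proof.
  induction m as [|m IH]; simpl; [split; [lia | intros [k [Hk _]]; lia]|].
  destruct (excluded_middle_informative (P m)) as [Pm|Pm].
  - split; [intros _; exists m; auto | intros _; lia].
  - rewrite Nat.add_0_r, IH. split; intros [k [Hk Pk]].
    + exists k; split; auto; lia.
    + exists k; split; auto. assert (k <> m) by (intros ->; auto). lia.
Qed.

Lemma countP_unique (P : nat -> Prop) m k0 : (k0 < m)%nat ->
  (forall k, (k < m)%nat -> (P k <-> k = k0)) -> countP P m = 1%nat.
Proof.
  induction m as [|m IH]; intros Hk0 H; [lia|]. simpl.
  destruct (Nat.eq_dec k0 m) as [->|Hne].
  - replace (countP P m) with 0%nat.
    + destruct (excluded_middle_informative (P m)) as [_|Pm]; auto.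
      exfalso; apply Pm, H; auto.
    + symmetry. destruct (countP P m) eqn:C; auto.
      destruct (proj1 (countP_pos_iff P m)) as [k [Hk Pk]]; [lia|].
      apply H in Pk; lia.
  - rewrite IH; [| lia | intros; apply H; lia].
    destruct (excluded_middle_informative (P m)) as [Pm|]; auto.
    apply H in Pm; lia.
Qed.

Lemma countP_true m : countP (fun _ => True) m = m.
Proof.
  induction m; simpl; auto. destruct (excluded_middle_informative True); [lia | tauto].
Qed.

Lemma exists_first (P : nat -> Prop) m : (exists j, (j < m)%nat /\ P j) ->
  exists j, (j < m)%nat /\ P j /\ forall k, (k < j)%nat -> ~ P k.
Proof.
  induction m as [|m IH]; intros [j [Hj Pj]]; [lia|].
  destruct (classic (exists j, (j < m)%nat /\ P j)) as [Hex|Hnone].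
  - destruct (IH Hex) as [j' [? [? ?]]]. exists j'; repeat split; auto.
  - assert (j = m) as ->.
    { destruct (Nat.eq_dec j m); auto. exfalso; apply Hnone; exists j; split; auto; lia. }
    exists m; repeat split; auto. intros k Hk Pk. apply Hnone; exists k; auto.
Qed.

Lemma sumR_ext f g m : (forall k, (k < m)%nat -> f k = g k) -> sumR f m = sumR g m.
Proof. induction m; simpl; intros H; auto. rewrite IHm, H; auto. Qed.

Lemma sumR_le f g m : (forall k, (k < m)%nat -> f k <= g k) -> sumR f m <= sumR g m.
Proof.
  induction m; simpl; intros H; [lra|].
  assert (f m <= g m) by auto. assert (sumR f m <= sumR g m) by auto. lra.
Qed.

Lemma sumR_plus f g m : sumR (fun k => f k + g k) m = sumR f m + sumR g m.
Proof. induction m; simpl; [lra|]. rewrite IHm; lra. Qed.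

Lemma sumR_scal c f m : sumR (fun k => c * f k) m = c * sumR f m.
Proof. induction m; simpl; [lra|]. rewrite IHm; lra. Qed.

Lemma sumR_const c m : sumR (fun _ => c) m = INR m * c.
Proof. induction m; simpl sumR; [simpl; ring|]. rewrite IHm, S_INR; ring. Qed.

Lemma sumR_nonneg f m : (forall k, (k < m)%nat -> 0 <= f k) -> 0 <= sumR f m.
Proof.
  intros H. rewrite <- (Rmult_0_r (INR m)), <- sumR_const. apply sumR_le; auto.
Qed.

Lemma sumR_ge_term f m k : (forall k, (k < m)%nat -> 0 <= f k) -> (k < m)%nat ->
  f k <= sumR f m.
Proof.
  induction m; simpl; intros H Hk; [lia|].
  destruct (Nat.eq_dec k m) as [->|Hne].
  - assert (0 <= sumR f m) by (apply sumR_nonneg; auto). lra.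
  - assert (f k <= sumR f m) by (apply IHm; auto; lia). assert (0 <= f m) by auto. lra.
Qed.

Lemma sumR_swap (F : nat -> nat -> R) m1 m2 :
  sumR (fun a => sumR (fun b => F a b) m2) m1 = sumR (fun b => sumR (fun a => F a b) m1) m2.
Proof.
  induction m1; simpl.
  - rewrite sumR_const; ring.
  - rewrite IHm1, <- sumR_plus. reflexivity.
Qed.

Lemma sumR_if_le (Q : nat -> Prop) (F : nat -> R) m c :
  (forall k, (k < m)%nat -> Q k -> F k <= c) ->
  sumR (fun k => if excluded_middle_informative (Q k) then F k else 0) m
    <= INR (countP Q m) * c.
Proof.
  induction m; simpl; intros H; [lra|].
  rewrite plus_INR. assert (IH := IHm (fun k Hk => H k ltac:(lia))).
  destruct (excluded_middle_informative (Q m)).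
  - assert (F m <= c) by auto. simpl; lra.
  - simpl; lra.
Qed.

Lemma exists_common_radius (P : nat -> R -> Prop) m :
  (forall j, (j < m)%nat -> exists d, 0 < d /\ P j d) ->
  (forall j d d', 0 < d' <= d -> P j d -> P j d') ->
  exists d, 0 < d /\ forall j, (j < m)%nat -> P j d.
Proof.
  intros H Hmono. induction m as [|m IH].
  - exists 1; split; [lra | intros; lia].
  - destruct IH as [d1 [Hd1 H1]]; [intros; apply H; lia|].
    destruct (H m) as [d2 [Hd2 H2]]; [lia|].
    exists (Rmin d1 d2).
    assert (0 < Rmin d1 d2) by (apply Rmin_glb_lt; auto).
    assert (Rmin d1 d2 <= d1) by apply Rmin_l. assert (Rmin d1 d2 <= d2) by apply Rmin_r.
    split; auto. intros j Hj. destruct (Nat.eq_dec j m) as [->|Hne].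
    + apply Hmono with d2; auto.
    + apply Hmono with d1; auto. apply H1; lia.
Qed.

Lemma Rinv_nonneg a : 0 <= a -> 0 <= / a.
Proof.
  intros H. destruct (Req_dec a 0) as [->|Hne]; [rewrite Rinv_0; lra|].
  left; apply Rinv_0_lt_compat; lra.
Qed.

Lemma ex_RInt_Rplus (f g : R -> R) a b :
  ex_RInt f a b -> ex_RInt g a b -> ex_RInt (fun t => f t + g t) a b.
Proof. intros Hf Hg. exact (ex_RInt_plus f g a b Hf Hg). Qed.

Lemma RInt_Rplus (f g : R -> R) a b : ex_RInt f a b -> ex_RInt g a b ->
  RInt (fun t => f t + g t) a b = RInt f a b + RInt g a b.
Proof. intros Hf Hg. exact (RInt_plus f g a b Hf Hg). Qed.

Lemma ex_RInt_Rmult_l (f : R -> R) a b k : ex_RInt f a b -> ex_RInt (fun t => k * f t) a b.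
Proof. intros Hf. exact (ex_RInt_scal f a b k Hf). Qed.

Lemma RInt_Rmult_l (f : R -> R) a b k : ex_RInt f a b -> RInt (fun t => k * f t) a b = k * RInt f a b.
Proof. intros Hf. exact (RInt_scal f a b k Hf). Qed.

Lemma RInt_Rchasles (f : R -> R) a b c : ex_RInt f a b -> ex_RInt f b c ->
  RInt f a b + RInt f b c = RInt f a c.
Proof. intros Hab Hbc. exact (RInt_Chasles f a b c Hab Hbc). Qed.

Lemma RInt_Rconst a b (c : R) : RInt (fun _ => c) a b = c * (b - a).
Proof. rewrite RInt_const. unfold scal; simpl; unfold mult; simpl. ring. Qed.

Lemma RInt_sumR (F : nat -> R -> R) m a b :
  (forall k, (k < m)%nat -> ex_RInt (F k) a b) ->
  ex_RInt (fun t => sumR (fun k => F k t) m) a b /\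
  RInt (fun t => sumR (fun k => F k t) m) a b = sumR (fun k => RInt (F k) a b) m.
Proof.
  induction m as [|m IH]; intros H; simpl.
  - split; [apply ex_RInt_const | rewrite RInt_Rconst; ring].
  - destruct IH as [I1 I2]; [intros; apply H; lia|].
    split; [apply ex_RInt_Rplus; auto; apply H; lia|].
    rewrite RInt_Rplus, I2; auto.
Qed.

Lemma ex_RInt_const_on (g : R -> R) a b c : a <= b ->
  (forall t, a < t < b -> g t = c) -> ex_RInt g a b.
Proof.
  intros Hab H. apply ex_RInt_ext with (f := fun _ => c); [|apply ex_RInt_const].
  intros t Ht. rewrite Rmin_left in Ht by lra. rewrite Rmax_right in Ht by lra. symmetry; auto.
Qed.

Lemma RInt_const_on (g : R -> R) a b c : a <= b ->
  (forall t, a < t < b -> g t = c) -> RInt g a b = c * (b - a).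
Proof.
  intros Hab H. rewrite (RInt_ext g (fun _ => c)), RInt_Rconst; auto.
  intros t Ht. rewrite Rmin_left in Ht by lra. rewrite Rmax_right in Ht by lra. auto.
Qed.

(* A least-upper-bound argument: the supremum of the [c] with [g] integrable
   on [[a, c]] is [b] and is attained, since [g] is constant on one-sided
   neighbourhoods of every point. *)
Lemma ex_RInt_one_sided_constant (g : R -> R) a b : a < b ->
  (forall t0, a <= t0 < b -> exists d, 0 < d /\ exists c,
     forall t, t0 < t < t0 + d -> t < b -> g t = c) ->
  (forall t0, a < t0 <= b -> exists d, 0 < d /\ exists c,
     forall t, t0 - d < t < t0 -> a < t -> g t = c) ->
  ex_RInt g a b.
Proof.
  intros Hab Hright Hleft.
  set (S := fun c => a <= c <= b /\ ex_RInt g a c).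
  assert (HS : bound S) by (exists b; intros c [Hc _]; lra).
  assert (Ha : S a) by (split; [lra | apply ex_RInt_point]).
  destruct (completeness S HS (ex_intro _ a Ha)) as [cs [Hub Hlub]].
  assert (Hacs : a <= cs) by (apply Hub; auto).
  assert (Hcsb : cs <= b) by (apply Hlub; intros c [Hc _]; lra).
  assert (Hcs : ex_RInt g a cs).
  { destruct (Req_dec cs a) as [->|Hne]; [apply ex_RInt_point|].
    destruct (Hleft cs) as [d [Hd [c Hc]]]; [lra|].
    set (d' := Rmin d (cs - a)).
    assert (0 < d') by (apply Rmin_glb_lt; lra).
    assert (d' <= d) by apply Rmin_l.
    assert (Hs : exists s, S s /\ cs - d' < s).
    { apply NNPP; intro Hno. assert (cs <= cs - d'); [|lra].
      apply Hlub. intros s Ss. apply Rnot_lt_le. intro Hs. apply Hno; exists s; auto. }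
    destruct Hs as [s [[Hs Hint] Hsd]].
    assert (s <= cs) by (apply Hub; split; auto).
    apply ex_RInt_Chasles with s; auto.
    apply ex_RInt_const_on with c; auto. intros t Ht. apply Hc; lra. }
  destruct (Rle_lt_dec b cs) as [Hb|Hb]; [replace b with cs by lra; auto|].
  destruct (Hright cs) as [d [Hd [c Hc]]]; [lra|].
  set (d' := Rmin d (b - cs)).
  assert (0 < d') by (apply Rmin_glb_lt; lra).
  assert (d' <= d) by apply Rmin_l. assert (d' <= b - cs) by apply Rmin_r.
  assert (Hbeyond : S (cs + d' / 2)).
  { split; [lra|]. apply ex_RInt_Chasles with cs; auto.
    apply ex_RInt_const_on with c; [lra|]. intros t Ht. apply Hc; lra. }
  apply Hub in Hbeyond. lra.
Qed.

Definition ind (a b t : R) : R := if Rlt_dec a t then if Rlt_dec t b then 1 else 0 else 0.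

Lemma ind_nonneg a b t : 0 <= ind a b t.
Proof. unfold ind. destruct (Rlt_dec a t); [destruct (Rlt_dec t b)|]; lra. Qed.

Lemma ind_in a b t : a < t < b -> ind a b t = 1.
Proof. intros. unfold ind. destruct (Rlt_dec a t); [destruct (Rlt_dec t b)|]; lra. Qed.

Lemma RInt_ind a b L : 0 <= a <= b -> b <= L ->
  ex_RInt (ind a b) 0 L /\ RInt (ind a b) 0 L = b - a.
Proof.
  intros Hab HbL.
  assert (I1 : forall t, 0 < t < a -> ind a b t = 0)
    by (intros; unfold ind; destruct (Rlt_dec a t); lra).
  assert (I2 : forall t, a < t < b -> ind a b t = 1) by (intros; apply ind_in; auto).
  assert (I3 : forall t, b < t < L -> ind a b t = 0)
    by (intros; unfold ind; destruct (Rlt_dec a t); [destruct (Rlt_dec t b)|]; lra).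
  assert (E1 : ex_RInt (ind a b) 0 a) by (apply ex_RInt_const_on with 0; auto; lra).
  assert (E2 : ex_RInt (ind a b) a b) by (apply ex_RInt_const_on with 1; auto; lra).
  assert (E3 : ex_RInt (ind a b) b L) by (apply ex_RInt_const_on with 0; auto; lra).
  assert (E23 : ex_RInt (ind a b) a L) by (apply ex_RInt_Chasles with b; auto).
  split; [apply ex_RInt_Chasles with a; auto|].
  rewrite <- (RInt_Rchasles _ 0 a L), <- (RInt_Rchasles _ a b L); auto.
  rewrite (RInt_const_on _ 0 a 0), (RInt_const_on _ a b 1), (RInt_const_on _ b L 0);
    auto; lra.
Qed.

Lemma RInt_ge_on_interval (g : R -> R) L a b c : 0 <= a <= b -> b <= L -> ex_RInt g 0 L ->
  (forall t, 0 < t < L -> 0 <= g t) -> (forall t, a < t < b -> c <= g t) -> 0 <= c ->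
  c * (b - a) <= RInt g 0 L.
Proof.
  intros Hab HbL Hg Hpos Hc Hc0.
  destruct (RInt_ind a b L Hab HbL) as [Ei Ri].
  rewrite <- Ri, <- RInt_Rmult_l by auto.
  apply RInt_le; [lra | apply ex_RInt_Rmult_l; auto | auto |].
  intros t Ht. unfold ind. destruct (Rlt_dec a t); [destruct (Rlt_dec t b)|].
  - rewrite Rmult_1_r. apply Hc; lra.
  - rewrite Rmult_0_r; auto.
  - rewrite Rmult_0_r; auto.
Qed.

Lemma integ_RInt (f : R -> R) a b : ex_RInt f a b -> integ f a b = RInt f a b.
Proof.
  intros H. unfold integ. destruct (excluded_middle_informative _) as [I|I].
  - symmetry. apply RInt_Reals.
  - exfalso. apply I. constructor. apply ex_RInt_Reals_0; auto.
Qed.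

Definition eventually_affine (h : R -> R) (t0 s : R) : Prop :=
  exists d a b, 0 < d /\ forall u, 0 < u < d -> h (t0 + s * u) = a + b * u.

Lemma eventually_affine_lin c k t0 s : eventually_affine (fun t => c + k * t) t0 s.
Proof. exists 1, (c + k * t0), (k * s). split; [lra | intros; ring]. Qed.

Lemma eventually_affine_ext h1 h2 t0 s : (forall t, h1 t = h2 t) ->
  eventually_affine h1 t0 s -> eventually_affine h2 t0 s.
Proof.
  intros E [d [a [b [Hd H]]]]. exists d, a, b; split; auto. intros; rewrite <- E; auto.
Qed.

Lemma eventually_affine_plus h1 h2 t0 s :
  eventually_affine h1 t0 s -> eventually_affine h2 t0 s ->
  eventually_affine (fun t => h1 t + h2 t) t0 s.
Proof.
  intros [d1 [a1 [b1 [H1 E1]]]] [d2 [a2 [b2 [H2 E2]]]].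
  exists (Rmin d1 d2), (a1 + a2), (b1 + b2). split; [apply Rmin_glb_lt; auto|].
  intros u Hu. assert (Rmin d1 d2 <= d1) by apply Rmin_l.
  assert (Rmin d1 d2 <= d2) by apply Rmin_r.
  rewrite E1, E2 by lra. ring.
Qed.

Lemma eventually_affine_opp h t0 s :
  eventually_affine h t0 s -> eventually_affine (fun t => - h t) t0 s.
Proof.
  intros [d [a [b [H E]]]]. exists d, (-a), (-b); split; auto.
  intros; rewrite E; auto; ring.
Qed.

Lemma affine_eventually_sign a b d : 0 < d -> exists d', 0 < d' <= d /\
  ((forall u, 0 < u < d' -> a + b * u <= 0) \/ (forall u, 0 < u < d' -> a + b * u > 0)).
Proof.
  intros Hd. destruct (Rtotal_order b 0) as [Hb|[->|Hb]].
  - destruct (Rle_dec a 0).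
    + exists d; split; [lra|]. left; intros u Hu. nra.
    + assert (0 < a / - b) by (apply Rdiv_lt_0_compat; lra).
      exists (Rmin d (a / - b)).
      split; [split; [apply Rmin_glb_lt; lra | apply Rmin_l]|]. right; intros u Hu.
      assert (u < a / - b) by (assert (Rmin d (a / - b) <= a / - b) by apply Rmin_r; lra).
      assert (Hlt : - b * u < - b * (a / - b)) by (apply Rmult_lt_compat_l; lra).
      replace (- b * (a / - b)) with a in Hlt by (field; lra). lra.
  - exists d; split; [lra|]. destruct (Rle_dec a 0); [left | right]; intros; lra.
  - destruct (Rle_dec 0 a).
    + exists d; split; [lra|]. right; intros u Hu. nra.
    + assert (0 < - a / b) by (apply Rdiv_lt_0_compat; lra).
      exists (Rmin d (- a / b)).
      split; [split; [apply Rmin_glb_lt; lra | apply Rmin_l]|]. left; intros u Hu.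
      assert (u < - a / b) by (assert (Rmin d (- a / b) <= - a / b) by apply Rmin_r; lra).
      assert (Hlt : b * u < b * (- a / b)) by (apply Rmult_lt_compat_l; lra).
      replace (b * (- a / b)) with (- a) in Hlt by (field; lra). lra.
Qed.

Lemma eventually_affine_sign h t0 s : eventually_affine h t0 s -> exists d, 0 < d /\
  ((forall u, 0 < u < d -> h (t0 + s * u) <= 0) \/
   (forall u, 0 < u < d -> h (t0 + s * u) > 0)).
Proof.
  intros [d [a [b [Hd E]]]]. destruct (affine_eventually_sign a b d Hd) as [d' [Hd' [Hs|Hs]]];
    exists d'; split; try lra; [left | right]; intros u Hu; rewrite E by lra; auto.
Qed.

Lemma eventually_affine_min h1 h2 t0 s :
  eventually_affine h1 t0 s -> eventually_affine h2 t0 s ->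
  eventually_affine (fun t => Rmin (h1 t) (h2 t)) t0 s.
Proof.
  intros [d1 [a1 [b1 [H1 E1]]]] [d2 [a2 [b2 [H2 E2]]]].
  set (d := Rmin d1 d2). assert (Hd : 0 < d) by (apply Rmin_glb_lt; auto).
  assert (Hd1 : d <= d1) by apply Rmin_l. assert (Hd2 : d <= d2) by apply Rmin_r.
  destruct (affine_eventually_sign (a1 - a2) (b1 - b2) d Hd) as [d' [Hd' [Hs|Hs]]].
  - exists d', a1, b1; split; [lra|]. intros u Hu. specialize (Hs u Hu).
    rewrite E1, E2 by lra. apply Rmin_left. lra.
  - exists d', a2, b2; split; [lra|]. intros u Hu. specialize (Hs u Hu).
    rewrite E1, E2 by lra. apply Rmin_right. lra.
Qed.

Lemma eventually_affine_abs h t0 s :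
  eventually_affine h t0 s -> eventually_affine (fun t => Rabs (h t)) t0 s.
Proof.
  intros Hh. apply eventually_affine_ext with (fun t => - Rmin (h t) (- h t)).
  - intros t. unfold Rmin. destruct (Rle_dec (h t) (- h t)).
    + rewrite Rabs_left1; lra.
    + rewrite Rabs_right; lra.
  - apply eventually_affine_opp, eventually_affine_min; auto.
    apply eventually_affine_opp; auto.
Qed.

Section Network.
Variables (nV : nat) (E : list (nat * nat)) (lam : nat -> R).
Hypothesis Hnet : network nV E lam.

Lemma edge_wf e : (e < length E)%nat ->
  (esrc E e < nV)%nat /\ (edst E e < nV)%nat /\ esrc E e <> edst E e /\ 0 < lam e.
Proof. destruct Hnet as [_ [H _]]. apply H. Qed.

Lemma lam_pos e : (e < length E)%nat -> 0 < lam e.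
Proof. intros He. apply (edge_wf e He). Qed.

Definition edge_end (e : nat) (b : bool) : nat := if b then esrc E e else edst E e.

Definition edge_offset (e : nat) (t : R) (b : bool) : R := if b then t else lam e - t.

Lemma edge_end_valid e b : (e < length E)%nat -> (edge_end e b < nV)%nat.
Proof. intros He. destruct (edge_wf e He) as [? [? _]]. destruct b; auto. Qed.

Lemma edge_end_incident e b v : edge_end e b = v -> esrc E e = v \/ edst E e = v.
Proof. destruct b; auto. Qed.

Lemma edge_offset_negb e t b : edge_offset e t (negb b) = lam e - edge_offset e t b.
Proof. destruct b; simpl; ring. Qed.

Lemma Rabs_edge_offset e t s b :
  Rabs (t - s) = Rabs (edge_offset e t b - edge_offset e s b).
Proof.
  destruct b; simpl; auto. replace (lam e - t - (lam e - s)) with (- (t - s)) by ring.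
  symmetry; apply Rabs_Ropp.
Qed.

Lemma walk_nonneg u v L : WalkLen E lam u v L -> 0 <= L.
Proof. induction 1 as [| e ? ? He | e ? ? He]; [lra | |]; pose proof (lam_pos e He); lra. Qed.

Lemma walk_last u v L : WalkLen E lam u v L ->
  (u = v /\ L = 0) \/
  exists e b L', (e < length E)%nat /\ edge_end e (negb b) = v /\
    WalkLen E lam u (edge_end e b) L' /\ L = L' + lam e.
Proof.
  induction 1 as [u | e w L He W IH | e w L He W IH].
  - left; auto.
  - right. destruct IH as [[Hw ->]|[e' [b [L' [He' [Hv [W' ->]]]]]]].
    + exists e, true, 0. simpl. repeat split; auto; [constructor | lra].
    + exists e', b, (lam e + L'). repeat split; auto; [apply walk_fwd; auto | lra].
  - right. destruct IH as [[Hw ->]|[e' [b [L' [He' [Hv [W' ->]]]]]]].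
    + exists e, false, 0. simpl. repeat split; auto; [constructor | lra].
    + exists e', b, (lam e + L'). repeat split; auto; [apply walk_bwd; auto | lra].
Qed.

Lemma incident_edge_exists v : (v < nV)%nat ->
  exists e, (e < length E)%nat /\ (esrc E e = v \/ edst E e = v).
Proof.
  intros Hv. destruct Hnet as [Hne [_ [_ [Hconn _]]]].
  destruct (edge_wf 0 ltac:(lia)) as [Hs [Hd [Hsd _]]].
  set (u := if Nat.eq_dec (esrc E 0) v then edst E 0 else esrc E 0).
  assert (Hu : (u < nV)%nat /\ u <> v)
    by (unfold u; destruct (Nat.eq_dec (esrc E 0) v); split; auto; congruence).
  destruct Hu as [Hu Huv]. destruct (Hconn v u Hv Hu) as [L W].
  destruct W as [| e ? ? He | e ? ? He]; [congruence | exists e; auto | exists e; auto].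
Qed.

Lemma dV_glb u v : (u < nV)%nat -> (v < nV)%nat ->
  is_glb (WalkLen E lam u v) (dV E lam u v).
Proof.
  intros Hu Hv. unfold dV. apply epsilon_spec.
  destruct Hnet as [_ [_ [_ [Hconn _]]]]. destruct (Hconn u v Hu Hv) as [L0 W0].
  set (S := fun y => exists L, WalkLen E lam u v L /\ y = - L).
  assert (HB : bound S) by (exists 0; intros y [L [W ->]]; pose proof (walk_nonneg _ _ _ W); lra).
  destruct (completeness S HB (ex_intro _ (- L0) (ex_intro _ L0 (conj W0 eq_refl))))
    as [M [Hub Hlub]].
  exists (- M). split.
  - intros a Wa. assert (- a <= M) by (apply Hub; exists a; auto). lra.
  - intros m' Hm'. assert (M <= - m'); [|lra]. apply Hlub. intros y [L [W ->]].
    pose proof (Hm' L W); lra.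
Qed.

Lemma dV_le u v L : (u < nV)%nat -> (v < nV)%nat -> WalkLen E lam u v L -> dV E lam u v <= L.
Proof. intros Hu Hv W. apply (dV_glb u v Hu Hv); auto. Qed.

Lemma dV_nonneg u v : (u < nV)%nat -> (v < nV)%nat -> 0 <= dV E lam u v.
Proof. intros Hu Hv. apply (dV_glb u v Hu Hv). intros; eapply walk_nonneg; eauto. Qed.

Lemma dV_refl u : (u < nV)%nat -> dV E lam u u = 0.
Proof.
  intros Hu. apply Rle_antisym; [apply dV_le; auto; constructor | apply dV_nonneg; auto].
Qed.

Lemma dV_approx u v eta : (u < nV)%nat -> (v < nV)%nat -> 0 < eta ->
  exists L, WalkLen E lam u v L /\ L < dV E lam u v + eta.
Proof.
  intros Hu Hv He. apply NNPP; intro Hno.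
  assert (dV E lam u v + eta <= dV E lam u v); [|lra].
  apply (dV_glb u v Hu Hv). intros a Wa. apply Rnot_lt_le. intro Ha. apply Hno; exists a; auto.
Qed.

Definition dist_via f t g s : R :=
  Rmin (Rmin (t + dV E lam (esrc E f) (esrc E g) + s)
             (t + dV E lam (esrc E f) (edst E g) + (lam g - s)))
       (Rmin ((lam f - t) + dV E lam (edst E f) (esrc E g) + s)
             ((lam f - t) + dV E lam (edst E f) (edst E g) + (lam g - s))).

Lemma dist_edge_edge f t g s : dist E lam (PE f t) (PE g s) =
  if Nat.eq_dec f g then Rmin (Rabs (t - s)) (dist_via f t g s) else dist_via f t g s.
Proof. reflexivity. Qed.

Lemma dist_edge_vertex f t v : dist E lam (PE f t) (PV v) =
  Rmin (t + dV E lam (esrc E f) v) (lam f - t + dV E lam (edst E f) v).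
Proof. reflexivity. Qed.

Lemma dist_le_via f t g s : dist E lam (PE f t) (PE g s) <= dist_via f t g s.
Proof. rewrite dist_edge_edge. destruct (Nat.eq_dec f g); [apply Rmin_r | lra]. Qed.

Lemma dist_le_Rabs f t s : dist E lam (PE f t) (PE f s) <= Rabs (t - s).
Proof. rewrite dist_edge_edge. destruct (Nat.eq_dec f f); [apply Rmin_l | congruence]. Qed.

Lemma dist_edge_edge_le_ends f t g s b b' :
  dist E lam (PE f t) (PE g s) <=
  edge_offset f t b + dV E lam (edge_end f b) (edge_end g b') + edge_offset g s b'.
Proof.
  eapply Rle_trans; [apply dist_le_via|].
  unfold dist_via, Rmin; destruct b, b'; simpl; repeat destruct Rle_dec; lra.
Qed.

Lemma dist_edge_vertex_end f t v : exists b,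
  dist E lam (PE f t) (PV v) = edge_offset f t b + dV E lam (edge_end f b) v.
Proof.
  rewrite dist_edge_vertex. unfold Rmin.
  destruct Rle_dec; [exists true | exists false]; reflexivity.
Qed.

Lemma dist_via_shift f t g s e : 0 < e ->
  Rmin (dist_via f t g (s - e)) (dist_via f t g (s + e)) <= dist_via f t g s - e.
Proof. intros He. unfold dist_via, Rmin. repeat destruct Rle_dec; lra. Qed.

Lemma Rmin_ends_lt_dist_via f t g s :
  (f < length E)%nat -> (g < length E)%nat -> 0 < s < lam g ->
  Rmin t (lam f - t) < dist_via f t g s.
Proof.
  intros Hf Hg Hs.
  destruct (edge_wf f Hf) as [Hf1 [Hf2 _]], (edge_wf g Hg) as [Hg1 [Hg2 _]].
  pose proof (dV_nonneg _ _ Hf1 Hg1). pose proof (dV_nonneg _ _ Hf1 Hg2).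
  pose proof (dV_nonneg _ _ Hf2 Hg1). pose proof (dV_nonneg _ _ Hf2 Hg2).
  unfold dist_via, Rmin. repeat destruct Rle_dec; lra.
Qed.

(* Any point that is not on the same edge is at least as far from [PE f t] as
   the nearer endpoint of [f]; on the same edge, the straight segment competes. *)
Lemma dist_edge_point_le f t w p :
  (f < length E)%nat -> valid_pt nV E lam p ->
  dist E lam (PE f t) w <= Rmin t (lam f - t) ->
  (forall s, p = PE f s -> dist E lam (PE f t) w <= Rabs (t - s)) ->
  dist E lam (PE f t) w <= dist E lam (PE f t) p.
Proof.
  intros Hf Hp Hend Hsame. destruct p as [u | g s].
  - destruct (edge_wf f Hf) as [Hf1 [Hf2 _]].
    pose proof (dV_nonneg _ u Hf1 Hp). pose proof (dV_nonneg _ u Hf2 Hp).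
    rewrite dist_edge_vertex. unfold Rmin in *. repeat destruct Rle_dec; lra.
  - destruct Hp as [Hg Hs]. pose proof (Rmin_ends_lt_dist_via f t g s Hf Hg Hs).
    specialize (Hsame s). rewrite dist_edge_edge. destruct (Nat.eq_dec f g) as [<-|].
    + specialize (Hsame eq_refl). unfold Rmin at 1. destruct Rle_dec; lra.
    + lra.
Qed.

Lemma dist_le_beside_position f0 t0 b w p :
  (f0 < length E)%nat -> valid_pt nV E lam p -> 0 <= t0 <= lam f0 ->
  edge_offset f0 t0 b < lam f0 ->
  (forall t, 0 < t < lam f0 -> dist E lam (PE f0 t) w <= Rabs (t - t0)) ->
  exists d, 0 < d /\ forall t,
    edge_offset f0 t0 b < edge_offset f0 t b <
      edge_offset f0 t0 b + Rmin d ((lam f0 - edge_offset f0 t0 b) / 2) ->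
    dist E lam (PE f0 t) w <= dist E lam (PE f0 t) p.
Proof.
  intros Hf0 Hp Ht0 Hu0 Hclose. set (u0 := edge_offset f0 t0 b) in *.
  assert (Hbeside : forall d t, u0 < edge_offset f0 t b < u0 + Rmin d ((lam f0 - u0) / 2) ->
    0 < t < lam f0 /\ dist E lam (PE f0 t) w <= Rmin t (lam f0 - t) /\
    forall s, edge_offset f0 s b <= u0 \/ u0 + 2 * (edge_offset f0 t b - u0) <= edge_offset f0 s b ->
      dist E lam (PE f0 t) w <= Rabs (t - s)).
  { intros d t Ht. pose proof (Rmin_r d ((lam f0 - u0) / 2)).
    assert (Htin : 0 < t < lam f0) by (unfold u0 in *; destruct b; simpl in *; lra).
    assert (Hoff : Rabs (t - t0) = edge_offset f0 t b - u0)
      by (rewrite (Rabs_edge_offset f0 t t0 b); fold u0; apply Rabs_right; lra).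
    split; [auto | split].
    - eapply Rle_trans; [apply Hclose; auto|]. rewrite Hoff.
      unfold u0 in *. destruct b; simpl in *; unfold Rmin; destruct Rle_dec; lra.
    - intros s Hs. eapply Rle_trans; [apply Hclose; auto|].
      rewrite Hoff, (Rabs_edge_offset f0 t s b). unfold Rabs; destruct Rcase_abs; lra. }
  destruct (classic (exists s, p = PE f0 s /\ u0 < edge_offset f0 s b)) as [[s [-> Hus]] | Hno].
  - exists ((edge_offset f0 s b - u0) / 2). split; [lra|]. intros t Ht.
    pose proof (Rmin_l ((edge_offset f0 s b - u0) / 2) ((lam f0 - u0) / 2)).
    destruct (Hbeside _ t Ht) as [Htin [Hends Hsame]].
    apply dist_edge_point_le; auto.
    intros s' Hs'. injection Hs' as <-. apply Hsame. right; lra.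
  - exists 1. split; [lra|]. intros t Ht.
    destruct (Hbeside _ t Ht) as [Htin [Hends Hsame]].
    apply dist_edge_point_le; auto.
    intros s Hs. apply Hsame. subst p.
    left. apply Rnot_lt_le. intro. apply Hno; eauto.
Qed.

Definition vertex_deviation (v : nat) (eps : R) (e : nat) : Pt :=
  PE e (if Nat.eq_dec (esrc E e) v then eps else lam e - eps).

Lemma vertex_deviation_offset v eps e b : (e < length E)%nat -> edge_end e b = v ->
  exists s, vertex_deviation v eps e = PE e s /\ edge_offset e s b = eps.
Proof.
  intros He Hb. destruct (edge_wf e He) as [_ [_ [Hsd _]]]. unfold vertex_deviation.
  destruct b; simpl in Hb; subst v; destruct (Nat.eq_dec (esrc E e) _);
    eexists; split; try reflexivity; simpl; try congruence; ring.
Qed.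

(* The last edge of a nearly shortest walk from [PE f t] to [v] carries a
   deviation point nearer than [v]. *)
Lemma vertex_deviation_closer v eps f t : (v < nV)%nat -> 0 < eps ->
  (f < length E)%nat -> eps <= t <= lam f - eps ->
  exists e, (e < length E)%nat /\ (esrc E e = v \/ edst E e = v) /\
    dist E lam (PE f t) (vertex_deviation v eps e) < dist E lam (PE f t) (PV v).
Proof.
  intros Hv Heps Hf Ht.
  destruct (dist_edge_vertex_end f t v) as [b ->].
  pose proof (edge_end_valid f b Hf) as Hfb.
  assert (Hoff : eps <= edge_offset f t b) by (destruct b; simpl; lra).
  destruct (dV_approx _ v eps Hfb Hv Heps) as [L [W HL]].
  destruct (walk_last _ _ _ W) as [[Hend ->] | [e [b' [L' [He [Hev [W' ->]]]]]]].
  - exists f. split; [|split]; auto; [eapply edge_end_incident; eauto|].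
    destruct (vertex_deviation_offset v eps f b Hf Hend) as [s [-> Hs]].
    pose proof (dist_le_Rabs f t s). rewrite (Rabs_edge_offset f t s b), Hs in *.
    rewrite Rabs_right in * by lra. rewrite Hend, dV_refl by auto. lra.
  - exists e. split; [|split]; auto; [eapply edge_end_incident; eauto|].
    destruct (vertex_deviation_offset v eps e (negb b') He Hev) as [s [-> Hs]].
    rewrite edge_offset_negb in Hs.
    pose proof (dist_edge_edge_le_ends f t e s b b').
    pose proof (dV_le _ _ _ Hfb (edge_end_valid e b' He) W'). lra.
Qed.

Lemma interior_deviation_closer ew sw f t eps : 0 < eps ->
  (f = ew -> eps <= Rabs (t - sw)) ->
  dist E lam (PE f t) (PE ew (sw - eps)) < dist E lam (PE f t) (PE ew sw) \/
  dist E lam (PE f t) (PE ew (sw + eps)) < dist E lam (PE f t) (PE ew sw).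
Proof.
  intros He Hfar.
  pose proof (dist_via_shift f t ew sw eps He).
  pose proof (dist_le_via f t ew (sw - eps)). pose proof (dist_le_via f t ew (sw + eps)).
  rewrite (dist_edge_edge f t ew sw). destruct (Nat.eq_dec f ew) as [->|Hne].
  - specialize (Hfar eq_refl).
    pose proof (dist_le_Rabs ew t (sw - eps)). pose proof (dist_le_Rabs ew t (sw + eps)).
    unfold Rmin in *. destruct (Rle_dec (Rabs (t - sw)) _);
      unfold Rabs in *; repeat destruct Rle_dec; repeat destruct Rcase_abs; lra.
  - unfold Rmin in *. repeat destruct Rle_dec; lra.
Qed.

End Network.

Section Shares.
Variables (nV : nat) (E : list (nat * nat)) (lam : nat -> R) (n : nat).

Lemma share_ext p i y1 y2 : (i < n)%nat ->
  (forall j k, (j < n)%nat -> (k < n)%nat ->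
     (dist E lam y1 (p j) <= dist E lam y1 (p k) <->
      dist E lam y2 (p j) <= dist E lam y2 (p k))) ->
  share E lam n p i y1 = share E lam n p i y2.
Proof.
  intros Hi H. unfold share. cbv zeta.
  rewrite (countP_ext _ (fun j =>
      (forall k, (k < n)%nat -> dist E lam y2 (p j) <= dist E lam y2 (p k)) /\
      (forall k, (k < j)%nat -> p k <> p j)) n).
  2:{ intros j Hj. split; intros [A B]; split; auto; intros k Hk; apply H; auto. }
  destruct (excluded_middle_informative _) as [A|A];
    destruct (excluded_middle_informative _) as [B|B]; auto;
    exfalso; [apply B | apply A]; intros k Hk; apply H; auto.
Qed.

Lemma share_nonneg p i y : 0 <= share E lam n p i y.
Proof.
  unfold share; cbv zeta. destruct (excluded_middle_informative _); [|lra].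
  apply Rinv_nonneg, Rmult_le_pos; apply pos_INR.
Qed.

Lemma share_one p i y : (i < n)%nat ->
  (forall j, (j < n)%nat -> j <> i -> dist E lam y (p i) < dist E lam y (p j) /\ p j <> p i) ->
  share E lam n p i y = 1.
Proof.
  intros Hi H. unfold share; cbv zeta.
  rewrite (countP_unique _ n i Hi).
  2:{ intros k Hk. split.
      - intros [Hmin _]. destruct (Nat.eq_dec k i) as [|Hki]; auto. exfalso.
        destruct (H k Hk Hki) as [Hlt _]. specialize (Hmin i Hi). lra.
      - intros ->. split.
        + intros j Hj. destruct (Nat.eq_dec j i) as [->|]; [lra|]. left; apply H; auto.
        + intros k Hk' Hki. destruct (H k ltac:(lia) ltac:(lia)) as [_ Hne]. auto. }
  rewrite (countP_unique _ n i Hi).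
  2:{ intros k Hk. split; [|intros ->; auto].
      intros Hki. destruct (Nat.eq_dec k i) as [|Hne]; auto. exfalso. apply (H k Hk Hne); auto. }
  destruct (excluded_middle_informative _) as [|Hnot]; [simpl; field|].
  exfalso. apply Hnot. intros j Hj. destruct (Nat.eq_dec j i) as [->|]; [lra|].
  left; apply H; auto.
Qed.

Ltac solve_affine := match goal with |- eventually_affine ?h _ _ =>
  apply eventually_affine_ext with (fun t => h 0 + (h 1 - h 0) * t);
  [intros; simpl; ring | apply eventually_affine_lin] end.

Lemma eventually_affine_dist p f t0 s :
  eventually_affine (fun t => dist E lam (PE f t) p) t0 s.
Proof.
  destruct p as [v | g s']; cbv beta iota zeta delta [dist].
  - apply eventually_affine_min; solve_affine.
  - destruct (Nat.eq_dec f g).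
    + apply eventually_affine_min; [apply eventually_affine_abs; solve_affine|].
      apply eventually_affine_min; apply eventually_affine_min; solve_affine.
    + apply eventually_affine_min; apply eventually_affine_min; solve_affine.
Qed.

(* Distances along an edge are piecewise affine, so on one side of any point
   the order between any two of them is eventually fixed. *)
Lemma share_one_sided_constant p i f t0 s : (i < n)%nat -> exists d, 0 < d /\
  forall u1 u2, 0 < u1 < d -> 0 < u2 < d ->
    share E lam n p i (PE f (t0 + s * u1)) = share E lam n p i (PE f (t0 + s * u2)).
Proof.
  intros Hi.
  set (Ord := fun j d => forall k, (k < n)%nat -> forall u1 u2, 0 < u1 < d -> 0 < u2 < d ->
     (dist E lam (PE f (t0 + s * u1)) (p j) <= dist E lam (PE f (t0 + s * u1)) (p k) <->
      dist E lam (PE f (t0 + s * u2)) (p j) <= dist E lam (PE f (t0 + s * u2)) (p k))).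
  destruct (exists_common_radius Ord n) as [d [Hd HOrd]].
  - intros j Hj. apply exists_common_radius.
    + intros k Hk.
      assert (Ha : eventually_affine
                (fun t => dist E lam (PE f t) (p j) + - dist E lam (PE f t) (p k)) t0 s)
        by (apply eventually_affine_plus; [|apply eventually_affine_opp];
            apply eventually_affine_dist).
      destruct (eventually_affine_sign _ _ _ Ha) as [d [Hd [Hsg|Hsg]]];
        exists d; split; auto; intros u1 u2 U1 U2;
        pose proof (Hsg u1 U1); pose proof (Hsg u2 U2); simpl in *; lra.
    + intros k d d' Hd' H u1 u2 U1 U2. apply H; lra.
  - intros j d d' Hd' H k Hk u1 u2 U1 U2. apply H; auto; lra.
  - exists d; split; auto. intros u1 u2 U1 U2. apply share_ext; auto.
    intros j k Hj Hk. apply HOrd; auto.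
Qed.

Lemma pt_of_interior f t : 0 < t < lam f -> pt_of E lam f t = PE f t.
Proof.
  intros H. unfold pt_of.
  destruct (Rle_dec t 0); [lra|]. destruct (Rle_dec (lam f) t); [lra | auto].
Qed.

Lemma ex_RInt_share p i f : (i < n)%nat -> 0 < lam f ->
  ex_RInt (fun t => share E lam n p i (pt_of E lam f t)) 0 (lam f).
Proof.
  intros Hi Hf. apply ex_RInt_one_sided_constant; auto.
  - intros t0 Ht0. destruct (share_one_sided_constant p i f t0 1 Hi) as [d [Hd H]].
    exists d; split; auto. exists (share E lam n p i (PE f (t0 + 1 * (d / 2)))).
    intros t Ht Htb. rewrite pt_of_interior by lra.
    replace t with (t0 + 1 * (t - t0)) by ring. apply H; lra.
  - intros t0 Ht0. destruct (share_one_sided_constant p i f t0 (-1) Hi) as [d [Hd H]].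
    exists d; split; auto. exists (share E lam n p i (PE f (t0 + -1 * (d / 2)))).
    intros t Ht Hta. rewrite pt_of_interior by lra.
    replace t with (t0 + -1 * (t0 - t)) by ring. apply H; lra.
Qed.

Hypothesis Hnet : network nV E lam.

Lemma payoff_RInt p i : (i < n)%nat -> payoff E lam n p i =
  sumR (fun f => RInt (fun t => share E lam n p i (pt_of E lam f t)) 0 (lam f)) (length E).
Proof.
  intros Hi. apply sumR_ext. intros f Hf.
  apply integ_RInt, ex_RInt_share, (lam_pos nV E lam Hnet); auto.
Qed.

End Shares.

Section Deviations.
Variables (nV : nat) (E : list (nat * nat)) (lam : nat -> R) (n : nat) (x : nat -> Pt).
Variable i0 : nat.
Hypothesis Hnet : network nV E lam.
Hypothesis Hnash : nash nV E lam n x.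
Hypothesis Hi0 : (i0 < n)%nat.

Definition nearest (z : Pt) : Prop :=
  forall j, (j < n)%nat -> dist E lam z (x i0) <= dist E lam z (x j).

Let K := countP (fun j => x j = x i0) n.

Lemma K_pos : (1 <= K)%nat.
Proof. apply countP_pos_iff. exists i0; auto. Qed.

Lemma valid_players j : (j < n)%nat -> valid_pt nV E lam (x j).
Proof. apply Hnash. Qed.

Lemma share_not_nearest z : ~ nearest z -> share E lam n x i0 z = 0.
Proof.
  intros Hz. unfold share; cbv zeta.
  destruct (excluded_middle_informative _); [contradiction | auto].
Qed.

Lemma share_nearest z : nearest z -> exists N, (1 <= N <= n)%nat /\
  share E lam n x i0 z = / (INR N * INR K).
Proof.
  intros Hz. unfold share; cbv zeta.
  destruct (excluded_middle_informative _); [|contradiction].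
  eexists; split; [split; [|apply countP_le] | reflexivity].
  apply countP_pos_iff.
  destruct (exists_first (fun j => x j = x i0) n) as [j [Hj [Hji Hfirst]]];
    [exists i0; auto|].
  exists j. rewrite Hji. repeat split; auto.
Qed.

Lemma count_mul_share_le_1 z : INR K * share E lam n x i0 z <= 1.
Proof.
  destruct (classic (nearest z)) as [Hz|Hz].
  - destruct (share_nearest z Hz) as [N [[HN _] ->]].
    pose proof K_pos as HK. apply le_INR in HK, HN. simpl in HK, HN.
    replace (INR K * / (INR N * INR K)) with (/ INR N) by (field; lra).
    rewrite <- Rinv_1. apply Rinv_le_contravar; lra.
  - rewrite share_not_nearest by auto. lra.
Qed.

Lemma share_ge_nearest z : nearest z -> / (INR n * INR K) <= share E lam n x i0 z.
Proof.
  intros Hz. destruct (share_nearest z Hz) as [N [[HN HNn] ->]].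
  pose proof K_pos as HK. apply le_INR in HK, HN, HNn. simpl in HK, HN.
  apply Rinv_le_contravar; [nra | apply Rmult_le_compat_r; lra].
Qed.

Lemma upd_same y : upd x i0 y i0 = y.
Proof. unfold upd. destruct (Nat.eq_dec i0 i0); congruence. Qed.

Lemma upd_other y j : j <> i0 -> upd x i0 y j = x j.
Proof. intros Hj. unfold upd. destruct (Nat.eq_dec j i0); congruence. Qed.

(* If [x i0] moves to an unoccupied point strictly closer to [z] than all
   players were, it captures [z] alone. *)
Lemma share_count_le_deviations z m (Q : nat -> Prop) (Y : nat -> Pt) g :
  0 <= g ->
  (1 <= g \/ exists e, (e < m)%nat /\ Q e /\ dist E lam z (Y e) < dist E lam z (x i0)) ->
  (forall e, (e < m)%nat -> Q e -> forall j, (j < n)%nat -> x j <> Y e) ->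
  INR K * share E lam n x i0 z <=
  sumR (fun e => if excluded_middle_informative (Q e)
                 then share E lam n (upd x i0 (Y e)) i0 z else 0) m + g.
Proof.
  intros Hg Hcover Hfree.
  set (F := fun e => if excluded_middle_informative (Q e)
                     then share E lam n (upd x i0 (Y e)) i0 z else 0).
  assert (HF : forall e, (e < m)%nat -> 0 <= F e).
  { intros e He. unfold F. destruct (excluded_middle_informative (Q e));
      [apply share_nonneg | lra]. }
  pose proof (count_mul_share_le_1 z). pose proof (sumR_nonneg F m HF).
  destruct Hcover as [Hg1 | [e [He [Qe Hcloser]]]]; [lra|].
  destruct (classic (nearest z)) as [Hz|Hz].
  2:{ rewrite share_not_nearest by auto. lra. }
  assert (HFe : F e = 1).
  { unfold F. destruct (excluded_middle_informative (Q e)); [|contradiction].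
    apply share_one; auto. intros j Hj Hji. rewrite upd_same, upd_other by auto.
    split; [specialize (Hz j Hj); lra | intro Hj'; apply (Hfree e He Qe j Hj); auto]. }
  pose proof (sumR_ge_term F m e HF He). lra.
Qed.

Lemma payoff_pos_of_nearest_interval f a b : (f < length E)%nat -> 0 <= a < b -> b <= lam f ->
  (forall t, a < t < b -> nearest (PE f t)) -> 0 < payoff E lam n x i0.
Proof.
  intros Hf Hab Hb Hnear.
  assert (Hl := lam_pos nV E lam Hnet).
  assert (Hsh : forall g, (g < length E)%nat ->
    ex_RInt (fun t => share E lam n x i0 (pt_of E lam g t)) 0 (lam g))
    by (intros g Hg; apply ex_RInt_share; auto).
  assert (Hc : 0 < / (INR n * INR K)).
  { pose proof K_pos as HK. assert (Hn : (1 <= n)%nat) by lia.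
    apply le_INR in HK, Hn. simpl in HK, Hn. apply Rinv_0_lt_compat. nra. }
  rewrite (payoff_RInt nV E lam n Hnet x i0 Hi0).
  apply Rlt_le_trans with (/ (INR n * INR K) * (b - a)); [apply Rmult_lt_0_compat; lra|].
  eapply Rle_trans; [|apply sumR_ge_term with (k := f); auto].
  - apply RInt_ge_on_interval; [lra | lra | auto | intros; apply share_nonneg | | lra].
    intros t Ht. rewrite pt_of_interior by lra. apply share_ge_nearest, Hnear; lra.
  - intros g Hg. apply RInt_ge_0; [left; auto | auto | intros; apply share_nonneg].
Qed.

Lemma nearest_interval f0 t0 : (f0 < length E)%nat -> 0 <= t0 <= lam f0 ->
  (forall t, 0 < t < lam f0 -> dist E lam (PE f0 t) (x i0) <= Rabs (t - t0)) ->
  exists a b, 0 <= a < b /\ b <= lam f0 /\ forall t, a < t < b -> nearest (PE f0 t).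
Proof.
  intros Hf0 Ht0 Hclose. pose proof (lam_pos nV E lam Hnet f0 Hf0) as Hl.
  assert (Hdir : exists b, edge_offset lam f0 t0 b < lam f0)
    by (destruct (Req_dec t0 (lam f0)); [exists false | exists true]; simpl; lra).
  destruct Hdir as [b Hu0]. set (u0 := edge_offset lam f0 t0 b) in *.
  assert (Hu00 : 0 <= u0) by (unfold u0; destruct b; simpl; lra).
  destruct (exists_common_radius (fun j d => forall t,
      u0 < edge_offset lam f0 t b < u0 + Rmin d ((lam f0 - u0) / 2) ->
      dist E lam (PE f0 t) (x i0) <= dist E lam (PE f0 t) (x j)) n) as [d [Hd Hnear]].
  - intros j Hj. apply (dist_le_beside_position nV); auto. apply valid_players; auto.
  - intros j d d' Hd' H t Ht. apply H.
    assert (Rmin d' ((lam f0 - u0) / 2) <= Rmin d ((lam f0 - u0) / 2))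
      by (unfold Rmin; repeat destruct Rle_dec; lra). lra.
  - set (r := Rmin d ((lam f0 - u0) / 2)).
    assert (0 < r) by (apply Rmin_glb_lt; lra). assert (r <= (lam f0 - u0) / 2) by apply Rmin_r.
    assert (Hin : forall t, u0 < edge_offset lam f0 t b < u0 + r -> nearest (PE f0 t))
      by (intros t Ht j Hj; apply Hnear; auto).
    destruct b; simpl in Hin, u0.
    + exists u0, (u0 + r). repeat split; try lra. intros t Ht; apply Hin; lra.
    + exists (lam f0 - u0 - r), (lam f0 - u0). repeat split; try lra. intros t Ht; apply Hin; lra.
Qed.

(* Unoccupied deviation points [Y e] (for [e < m] with [Q e]) such that every
   consumer on an edge strictly prefers one of them to [x i0], except on an
   exceptional set whose indicator is dominated by [G] (of mass [<= c] per edge). *)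
Definition covering_deviations (m : nat) (Q : nat -> Prop) (Y : nat -> Pt)
    (G : nat -> R -> R) (c : R) : Prop :=
  (forall e, (e < m)%nat -> Q e ->
     valid_pt nV E lam (Y e) /\ forall j, (j < n)%nat -> x j <> Y e) /\
  (forall f, (f < length E)%nat -> ex_RInt (G f) 0 (lam f) /\ RInt (G f) 0 (lam f) <= c) /\
  (forall f t, (f < length E)%nat -> 0 < t < lam f -> 0 <= G f t /\
     (1 <= G f t \/ exists e, (e < m)%nat /\ Q e /\
        dist E lam (PE f t) (Y e) < dist E lam (PE f t) (x i0))).

Lemma RInt_share_count_le m Q Y G c f : covering_deviations m Q Y G c ->
  (f < length E)%nat ->
  INR K * RInt (fun t => share E lam n x i0 (pt_of E lam f t)) 0 (lam f) <=
  sumR (fun e => if excluded_middle_informative (Q e)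
     then RInt (fun t => share E lam n (upd x i0 (Y e)) i0 (pt_of E lam f t)) 0 (lam f)
     else 0) m + c.
Proof.
  intros [HY [HG Hcov]] Hf. pose proof (lam_pos nV E lam Hnet f Hf) as Hl.
  destruct (HG f Hf) as [HGint HGc].
  set (F := fun e => if excluded_middle_informative (Q e)
    then (fun t => share E lam n (upd x i0 (Y e)) i0 (pt_of E lam f t)) else (fun _ : R => 0)).
  assert (HF : forall e, (e < m)%nat -> ex_RInt (F e) 0 (lam f)).
  { intros e He. unfold F. destruct (excluded_middle_informative (Q e));
      [apply ex_RInt_share; auto | apply ex_RInt_const]. }
  destruct (RInt_sumR F m 0 (lam f) HF) as [Hsum_int Hsum].
  assert (HFint : forall e, (e < m)%nat -> RInt (F e) 0 (lam f) =
    if excluded_middle_informative (Q e)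
    then RInt (fun t => share E lam n (upd x i0 (Y e)) i0 (pt_of E lam f t)) 0 (lam f)
    else 0).
  { intros e He. unfold F.
    destruct (excluded_middle_informative (Q e)); [reflexivity | rewrite RInt_Rconst; apply Rmult_0_l]. }
  rewrite <- RInt_Rmult_l by (apply ex_RInt_share; auto).
  apply Rle_trans with (RInt (fun t => sumR (fun k => F k t) m + G f t) 0 (lam f)).
  - apply RInt_le; [lra | apply ex_RInt_Rmult_l, ex_RInt_share; auto
                   | apply ex_RInt_Rplus; auto |].
    intros t Ht. rewrite pt_of_interior by lra.
    destruct (Hcov f t Hf Ht) as [HG0 HGcov].
    eapply Rle_trans; [apply share_count_le_deviations with (Q := Q) (Y := Y); eauto; apply HY|].
    right. f_equal. apply sumR_ext. intros e He. unfold F.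
    destruct (excluded_middle_informative (Q e)); auto.
    rewrite pt_of_interior by lra. reflexivity.
  - rewrite RInt_Rplus, Hsum by auto. apply Rplus_le_compat; auto.
    right. apply sumR_ext. exact HFint.
Qed.

(* Integrating the pointwise bound and using that no deviation is profitable. *)
Lemma payoff_count_le m Q Y G c : covering_deviations m Q Y G c ->
  INR K * payoff E lam n x i0 <=
  INR (countP Q m) * payoff E lam n x i0 + INR (length E) * c.
Proof.
  intros Hcov. rewrite !(payoff_RInt nV E lam n Hnet _ i0 Hi0), <- sumR_scal.
  eapply Rle_trans; [apply sumR_le; intros f Hf; apply (RInt_share_count_le m Q Y G c f Hcov Hf)|].
  rewrite sumR_plus, sumR_swap, sumR_const.
  apply Rplus_le_compat_r.
  rewrite <- (payoff_RInt nV E lam n Hnet x i0 Hi0).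
  eapply Rle_trans; [|apply (sumR_if_le Q (fun e => payoff E lam n (upd x i0 (Y e)) i0))].
  - right. apply sumR_ext. intros e He.
    destruct (excluded_middle_informative (Q e)).
    + rewrite (payoff_RInt nV E lam n Hnet _ i0 Hi0). reflexivity.
    + rewrite sumR_const; ring.
  - intros e He Qe. destruct Hnash as [_ HN]. destruct Hcov as [HY _].
    apply HN; auto. apply HY; auto.
Qed.

Lemma covering_deviations_absurd m Q (Y : R -> nat -> Pt) (G : R -> nat -> R -> R) :
  0 < payoff E lam n x i0 -> (countP Q m < K)%nat ->
  (exists d, 0 < d /\ forall eps, 0 < eps < d ->
     covering_deviations m Q (Y eps) (G eps) (2 * eps)) ->
  False.
Proof.
  intros HP HK [d [Hd Hcov]].
  set (P := payoff E lam n x i0) in *.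
  set (L := INR (length E)). assert (HL : 0 <= L) by apply pos_INR.
  set (eps := Rmin (d / 2) (P / (4 * L + 4))).
  assert (He1 : eps <= d / 2) by apply Rmin_l.
  assert (He2 : eps <= P / (4 * L + 4)) by apply Rmin_r.
  assert (He0 : 0 < eps) by (apply Rmin_glb_lt; [lra | apply Rdiv_lt_0_compat; lra]).
  pose proof (payoff_count_le m Q (Y eps) (G eps) (2 * eps) (Hcov eps ltac:(lra))) as Hle.
  assert (Hsmall : L * (2 * eps) < P).
  { apply (Rmult_le_compat_r (4 * L + 4)) in He2; [|lra].
    replace (P / (4 * L + 4) * (4 * L + 4)) with P in He2 by (field; lra).
    nra. }
  assert (INR (countP Q m) + 1 <= INR K) by (rewrite <- S_INR; apply le_INR; lia).
  fold L P in Hle. nra.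
Qed.

Lemma payoff_pos_at_vertex v : x i0 = PV v -> 0 < payoff E lam n x i0.
Proof.
  intros Hxv. pose proof (valid_players i0 Hi0) as Hv. rewrite Hxv in Hv.
  destruct (incident_edge_exists nV E lam Hnet v Hv) as [f0 [Hf0 Hinc]].
  destruct (edge_wf nV E lam Hnet f0 Hf0) as [Hsrc [Hdst [_ Hl]]].
  set (t0 := if Nat.eq_dec (esrc E f0) v then 0 else lam f0).
  destruct (nearest_interval f0 t0 Hf0) as [a [b [Hab [Hb Hnear]]]].
  - unfold t0; destruct Nat.eq_dec; lra.
  - intros t Ht. rewrite Hxv, dist_edge_vertex. unfold t0.
    destruct Nat.eq_dec as [Hs|Hs].
    + rewrite <- Hs, (dV_refl nV E lam Hnet) by auto.
      eapply Rle_trans; [apply Rmin_l|]. rewrite Rabs_right; lra.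
    + destruct Hinc as [|Hd]; [contradiction|].
      rewrite <- Hd, (dV_refl nV E lam Hnet) by auto.
      eapply Rle_trans; [apply Rmin_r|]. rewrite Rabs_left1; lra.
  - apply (payoff_pos_of_nearest_interval f0 a b); auto.
Qed.

Lemma players_off_edge_ends : exists d, 0 < d /\ forall j, (j < n)%nat ->
  forall eps, 0 < eps < d -> forall e, x j <> PE e eps /\ x j <> PE e (lam e - eps).
Proof.
  apply exists_common_radius; [|intros j d d' Hd' H eps He; apply H; lra].
  intros j Hj. pose proof (valid_players j Hj) as Hxj. destruct (x j) as [u | g s].
  - exists 1; split; [lra|]. intros; split; discriminate.
  - destruct Hxj as [_ Hs]. exists (Rmin s (lam g - s)).
    assert (Rmin s (lam g - s) <= s) by apply Rmin_l.
    assert (Rmin s (lam g - s) <= lam g - s) by apply Rmin_r.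
    split; [apply Rmin_glb_lt; lra|].
    intros eps He e. split; intros Heq; injection Heq; intros; subst; lra.
Qed.

Lemma vertex_deviations_covering v : x i0 = PV v ->
  exists d, 0 < d /\ forall eps, 0 < eps < d ->
    covering_deviations (length E) (fun e => esrc E e = v \/ edst E e = v)
      (vertex_deviation E lam v eps)
      (fun f t => ind 0 eps t + ind (lam f - eps) (lam f) t) (2 * eps).
Proof.
  intros Hxv. pose proof (valid_players i0 Hi0) as Hv. rewrite Hxv in Hv.
  pose proof (lam_pos nV E lam Hnet) as Hl.
  destruct players_off_edge_ends as [dO [HdO Hfree]].
  destruct (exists_common_radius (fun e d => d <= lam e / 2) (length E)) as [dE [HdE Hshort]].
  { intros e He. exists (lam e / 2). pose proof (Hl e He). split; lra. }
  { intros e d d' Hd' H. lra. }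
  exists (Rmin dO dE). split; [apply Rmin_glb_lt; auto|]. intros eps Heps.
  assert (Heps1 : eps < dO) by (pose proof (Rmin_l dO dE); lra).
  assert (Heps2 : forall e, (e < length E)%nat -> 2 * eps < lam e)
    by (intros e He; pose proof (Rmin_r dO dE); pose proof (Hshort e He); lra).
  split; [|split].
  - intros e He _. pose proof (Heps2 e He). unfold vertex_deviation.
    destruct Nat.eq_dec; (split; [simpl; split; auto; lra|]);
      intros j Hj; apply (Hfree j Hj eps ltac:(lra) e).
  - intros f Hf. pose proof (Heps2 f Hf).
    destruct (RInt_ind 0 eps (lam f)) as [I1 R1]; try lra.
    destruct (RInt_ind (lam f - eps) (lam f) (lam f)) as [I2 R2]; try lra.
    split; [apply ex_RInt_Rplus; auto | rewrite RInt_Rplus by auto; lra].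
  - intros f t Hf Ht. pose proof (ind_nonneg 0 eps t).
    pose proof (ind_nonneg (lam f - eps) (lam f) t).
    split; [lra|].
    destruct (Rlt_dec t eps); [left; rewrite ind_in; lra|].
    destruct (Rlt_dec (lam f - eps) t); [left; rewrite (ind_in (lam f - eps)); lra|].
    right. rewrite Hxv. apply (vertex_deviation_closer nV E lam Hnet); auto; lra.
Qed.

Lemma vertex_count_le_degree v : x i0 = PV v -> (K <= vdegree E v)%nat.
Proof.
  intros Hxv. apply Nat.nlt_ge. intro Hexcess.
  apply (covering_deviations_absurd _ _ _ _ (payoff_pos_at_vertex v Hxv) Hexcess
           (vertex_deviations_covering v Hxv)).
Qed.

Lemma players_off_near_interior ew sw : exists d, 0 < d /\ forall j, (j < n)%nat ->
  forall eps, 0 < eps < d -> x j <> PE ew (sw - eps) /\ x j <> PE ew (sw + eps).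
Proof.
  apply exists_common_radius; [|intros j d d' Hd' H eps He; apply H; lra].
  intros j Hj. destruct (classic (exists s, x j = PE ew s /\ s <> sw)) as [[s [-> Hs]] | Hno].
  - exists (Rabs (s - sw)). split; [apply Rabs_pos_lt; lra|].
    intros eps He; split; intros Heq; injection Heq; intros; subst;
      unfold Rabs in He; destruct Rcase_abs in He; lra.
  - exists 1. split; [lra|]. intros eps He; split; intros Heq; apply Hno;
      [exists (sw - eps) | exists (sw + eps)]; split; auto; lra.
Qed.

Lemma interior_deviations_covering ew sw : x i0 = PE ew sw ->
  exists d, 0 < d /\ forall eps, 0 < eps < d ->
    covering_deviations 2 (fun _ => True)
      (fun e => if Nat.eq_dec e 0 then PE ew (sw - eps) else PE ew (sw + eps))
      (fun f t => if Nat.eq_dec f ew then ind (sw - eps) (sw + eps) t else 0) (2 * eps).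
Proof.
  intros Hxw. pose proof (valid_players i0 Hi0) as Hw. rewrite Hxw in Hw.
  destruct Hw as [Hew Hsw].
  destruct (players_off_near_interior ew sw) as [dO [HdO Hfree]].
  exists (Rmin dO (Rmin sw (lam ew - sw))).
  split; [apply Rmin_glb_lt; [|apply Rmin_glb_lt]; lra|]. intros eps Heps.
  assert (eps < dO /\ eps < sw /\ eps < lam ew - sw) as [He1 [He2 He3]].
  { pose proof (Rmin_l dO (Rmin sw (lam ew - sw))). pose proof (Rmin_r dO (Rmin sw (lam ew - sw))).
    pose proof (Rmin_l sw (lam ew - sw)). pose proof (Rmin_r sw (lam ew - sw)). lra. }
  split; [|split].
  - intros e He _. destruct Nat.eq_dec; (split; [simpl; split; auto; lra|]);
      intros j Hj; apply (Hfree j Hj eps ltac:(lra)).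
  - intros f Hf. destruct (Nat.eq_dec f ew).
    + destruct (RInt_ind (sw - eps) (sw + eps) (lam ew)) as [Hint Hval]; try lra.
      subst f. split; [exact Hint | apply Rle_trans with (sw + eps - (sw - eps)); [right; exact Hval | lra]].
    + split; [apply ex_RInt_const | rewrite RInt_Rconst; lra].
  - intros f t Hf Ht. split; [destruct Nat.eq_dec; [apply ind_nonneg | lra]|].
    destruct (classic (f = ew /\ Rabs (t - sw) < eps)) as [[-> Hnear] | Hfar].
    + left. destruct Nat.eq_dec; [|congruence]. rewrite ind_in; [lra|].
      unfold Rabs in Hnear; destruct Rcase_abs in Hnear; lra.
    + right. rewrite Hxw.
      destruct (interior_deviation_closer E lam ew sw f t eps) as [Hc|Hc]; [lra | | |].
      * intros ->. apply Rnot_lt_le. intro. apply Hfar; auto.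
      * exists 0%nat; auto.
      * exists 1%nat; auto.
Qed.

Lemma interior_count_le_2 ew sw : x i0 = PE ew sw -> (K <= 2)%nat.
Proof.
  intros Hxw. pose proof (valid_players i0 Hi0) as Hw. rewrite Hxw in Hw.
  destruct Hw as [Hew Hsw].
  assert (HP : 0 < payoff E lam n x i0).
  { destruct (nearest_interval ew sw Hew) as [a [b [Hab [Hb Hnear]]]]; [lra| |].
    - intros t Ht. rewrite Hxw. apply dist_le_Rabs.
    - apply (payoff_pos_of_nearest_interval ew a b); auto. }
  apply Nat.nlt_ge. intro Hexcess.
  assert (Hfew : (countP (fun _ => True) 2 < K)%nat) by (rewrite countP_true; exact Hexcess).
  apply (covering_deviations_absurd _ _ _ _ HP Hfew (interior_deviations_covering ew sw Hxw)).
Qed.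

End Deviations.

Theorem mainTheorem6 (nV : nat) (E : list (nat * nat)) (lam : nat -> R)
  (n : nat) (x : nat -> Pt) :
  network nV E lam ->
  nash nV E lam n x ->
  vertex_property nV E n x ->
  forall w, valid_pt nV E lam w ->
    (countP (fun i => x i = w) n <= degree E w)%nat.
Proof.
  intros Hnet Hnash _ w _.
  destruct (Nat.eq_dec (countP (fun i => x i = w) n) 0) as [->|Hocc]; [lia|].
  destruct (proj1 (countP_pos_iff (fun i => x i = w) n)) as [i0 [Hi0 <-]]; [lia|].
  destruct (x i0) as [v | ew sw] eqn:Hx; simpl.
  - rewrite <- Hx. apply (vertex_count_le_degree nV E lam n x i0 Hnet Hnash Hi0 v Hx).
  - rewrite <- Hx. apply (interior_count_le_2 nV E lam n x i0 Hnet Hnash Hi0 ew sw Hx).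
Qed.
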